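(* For any planar weighted graph $(G,x)$ as in the context, $$\mathcal Z_{\mathrm{Ising}}(G,x)=\sum_{D\in\mathcal D(G^K)}(-1)^{t(D)}\,x^K(D).$$
   Context: Let $G$ be a finite connected graph embedded in the plane, with edge weights $x=(x_e)$. Let $\vec E(G)$ be the set of oriented edges, with origin $o(e)$ and reversal $\bar e$. $\mathcal E(G)$ is the set of even subgraphs (edge sets in which every vertex has even degree), $x(P)=\prod_{e\in P}x_e$, and $\mathcal Z_{\mathrm{Ising}}(G,x)=\sum_{P\in\mathcal E(G)}x(P)$. Terminal graph $G^K$. Its vertex set is $\vec E(G)$. It has two kinds of edges: - a long edge $\{e,\bar e\}$ of weight $1$ for each edge of $G$; - a short edge $\{e,e'\}$ of weight $(x_ex_{e'})^{1/2}$ for each pair $e\ne e'$ with $o(e)=o(e')$. So each vertex $v$ of $G$ of degree $d(v)$ is replaced by a complete graph $K_{d(v)}$. $\mathcal D(G^K)$ is the set of perfect matchings (dimer configurations) of $G^K$, and $x^K(D)$ is the product of the weights of the edges of $D$. For $D\in\mathcal D(G^K)$, $t(D)$ is the number of unordered pairs of short edges $\{e_1,e_2\},\{e_3,e_4\}$ of $D$ at the same vertex $v$ of $G$ whose endpoints interlace in the cyclic order of the edges of $G$ around $v$. This is the number of crossings when the cliques are drawn as chords of a small circle around $v$. *)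

From HB Require Import structures.
From mathcomp Require Import all_boot all_order all_fingroup all_algebra.
Set Implicit Arguments. Unset Strict Implicit. Unset Printing Implicit Defensive.
Import Order.TTheory GRing.Theory Num.Theory.
Local Open Scope ring_scope.

(* A planar embedded graph G is given combinatorially as a rotation system:
   - E : finType is the set of (undirected) edges of G;
   - the oriented edges (darts) are  E * bool, the reversal of (e,b) is (e,~~b);
   - sigma : {perm E * bool} gives, for each dart, the next dart (in the
     cyclic order around the common origin vertex); the vertices of G are the
     sigma-cycles, and the origin o(d) is the sigma-cycle of d. *)

Definition dart (E : finType) := (E * bool)%type.
Definition drev (E : finType) (d : dart E) : dart E := (d.1, ~~ d.2).

Definition same_vertex (E : finType) (sigma : {perm dart E}) (a b : dart E) :=
  fconnect sigma a b.

Definition rs_connected (E : finType) (sigma : {perm dart E}) :=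
  forall a b : dart E,
    connect (fun u v : dart E => (v == sigma u) || (v == drev u)) a b.

Definition face_perm (E : finType) (sigma : {perm dart E}) (d : dart E) :=
  sigma (drev d).

(* genus-0 (planar) embedding: Euler's formula V - E + F = 2 *)
Definition rs_planar (E : finType) (sigma : {perm dart E}) :=
  (fcard sigma (@predT (dart E)) + fcard (face_perm sigma) (@predT (dart E)) = #|E| + 2)%N.

(* P is an even subgraph: every vertex has even degree in P (a loop counts 2) *)
Definition even_subgraph (E : finType) (sigma : {perm dart E}) (P : {set E}) :=
  [forall d : dart E, ~~ odd #|[set d' : dart E | same_vertex sigma d d' & d'.1 \in P]|].

Definition Z_Ising (R : rcfType) (E : finType) (sigma : {perm dart E})
    (x : E -> R) : R :=
  \sum_(P : {set E} | even_subgraph sigma P) \prod_(e in P) x e.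

(* Edges of G^K: inl e is the long edge {e, rev e}; inr S (with S a 2-set of
   darts at a common vertex) is the short edge S. *)
Definition kedge (E : finType) := (E + {set dart E})%type.

Definition kedge_valid (E : finType) (sigma : {perm dart E}) (k : kedge E) : bool :=
  match k with
  | inl _ => true
  | inr S0 => (#|S0| == 2)%N && [forall a in S0, forall b in S0, same_vertex sigma a b]
  end.

Definition kends (E : finType) (k : kedge E) : {set dart E} :=
  match k with
  | inl e => [set (e, true); (e, false)]
  | inr S0 => S0
  end.

Definition kweight (R : rcfType) (E : finType) (x : E -> R) (k : kedge E) : R :=
  match k with
  | inl _ => 1
  | inr S0 => Num.sqrt (\prod_(d in S0) x d.1)
  end.

Definition dimer (E : finType) (sigma : {perm dart E}) (D : {set kedge E}) :=
  [forall k in D, kedge_valid sigma k] &&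
  [forall d : dart E, #|[set k in D | d \in kends k]| == 1%N].

(* the chords {a,b} and {c,d} (four distinct darts at the same vertex)
   interlace in the cyclic order sigma around that vertex *)
Definition interlace (E : finType) (sigma : {perm dart E}) (a b c d : dart E) :=
  [&& same_vertex sigma a b, same_vertex sigma a c, same_vertex sigma a d,
      uniq [:: a; b; c; d] &
      (findex sigma a c < findex sigma a b)%N != (findex sigma a d < findex sigma a b)%N].

Definition kcross (E : finType) (sigma : {perm dart E}) (k1 k2 : kedge E) :=
  match k1, k2 with
  | inr S1, inr S2 =>
      [exists a, exists b, exists c, exists d,
        [&& S1 == [set a; b], S2 == [set c; d] & interlace sigma a b c d]]
  | _, _ => false
  end.

Definition tcross (E : finType) (sigma : {perm dart E}) (D : {set kedge E}) : nat :=
  #|[set Q : {set kedge E} | (Q \subset D) &&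
      [exists k1, exists k2, (Q == [set k1; k2]) && (k1 != k2) && kcross sigma k1 k2]]|.

Definition Z_dimer_signed (R : rcfType) (E : finType) (sigma : {perm dart E})
    (x : E -> R) : R :=
  \sum_(D : {set kedge E} | dimer sigma D)
     (-1) ^+ tcross sigma D * \prod_(k in D) kweight x k.

From Pilot Require Import Defs.
From HB Require Import structures.
From mathcomp Require Import all_boot all_order all_fingroup all_algebra.
From mathcomp Require Import zify.
Import Order.TTheory GRing.Theory Num.Theory.
Set Implicit Arguments. Unset Strict Implicit. Unset Printing Implicit Defensive.

(* A dimer configuration of G^K is determined by its set L of long edges and by a
   perfect matching F, with chords inside the vertex cliques, of the darts whose edge
   is not in L; its weight is the product of the x_e over the edges outside L.  For
   fixed L the signed sum over F is 1 if every vertex carries an even number of these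
   darts and 0 otherwise.  Indeed, pick such a dart a and split the sum according to
   the partner b of a in F.  The number of chords of F crossing {a,b} has the parity
   of the number of remaining darts strictly between a and b in the cyclic order
   around the vertex, and removing a and b preserves all vertex parities, so by
   induction the sum is the indicator of evenness times the sum of (-1)^(rank of b)
   over the candidates b, which is the parity of their number.  Hence exactly the L
   whose complement is an even subgraph contribute, each with weight x(~: L). *)

Definition between (i j k : nat) := (i < k < j) || (j < k < i).

Lemma between_sym i j k : between i j k = between j i k.
Proof. by rewrite /between orbC. Qed.

Lemma between_swap i j k l : uniq [:: i; j; k; l] ->
  (between i j k != between i j l) = (between k l i != between k l j).
Proof. rewrite /between /= !inE; lia. Qed.

Section CyclicOrder.
Variables (T : finType) (f : {perm T}).
Local Notation pos := (findex f).

Lemma fconnect_permC x y : fconnect f x y = fconnect f y x.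
Proof. exact: (fconnect_sym (@perm_inj _ f)). Qed.

Lemma order_fconnect x y : fconnect f x y -> fingraph.order f y = fingraph.order f x.
Proof.
by move=> xy; apply: eq_card => z; rewrite !inE (same_connect fconnect_permC xy).
Qed.

Lemma findex_inj x : {in fconnect f x &, injective (pos x)}.
Proof. by move=> y z xy xz e; rewrite -(iter_findex xy) -(iter_findex xz) e. Qed.

Lemma findex_shift x y z : fconnect f x y -> fconnect f x z ->
  pos y z = if pos x y <= pos x z then pos x z - pos x y
            else pos x z + fingraph.order f x - pos x y.
Proof.
move=> xy xz; have lt_y := findex_max xy; have lt_z := findex_max xz.
have fy := iter_findex xy; have fz := iter_findex xz.
move: lt_y lt_z fy fz.
set i := pos x y; set j := pos x z => lt_i lt_j fy fz.
case: leqP => [le_ij|lt_ji].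
  have -> : z = iter (j - i) f y by rewrite -fy -iterD subnK.
  by rewrite findex_iter ?(order_fconnect xy); lia.
have -> : z = iter (j + fingraph.order f x - i) f y.
  by rewrite -fy -iterD subnK ?iterD ?(iter_order (@perm_inj _ f)) //; lia.
by rewrite findex_iter ?(order_fconnect xy); lia.
Qed.

Lemma uniq_findex r s : all (fconnect f r) s -> uniq (map (pos r) s) = uniq s.
Proof.
move=> /allP s_r; apply: map_inj_in_uniq.
by apply: sub_in2 (@findex_inj r) => y /s_r.
Qed.

Lemma findex_ltn_shift r u v t :
    fconnect f r u -> fconnect f r v -> fconnect f r t ->
    u != v -> u != t -> v != t ->
  (pos u t < pos u v) = between (pos r u) (pos r v) (pos r t) (+) (pos r v < pos r u).
Proof.
move=> ru rv rt uv ut vt; rewrite !(findex_shift ru) //.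
have := @uniq_findex r [:: u; v; t]; rewrite /= !inE !negb_or uv ut vt ru rv rt /=.
move=> /(_ isT); move: (findex_max ru) (findex_max rv) (findex_max rt).
rewrite /between; case: (leqP (pos r u) (pos r v)); case: (leqP (pos r u) (pos r t)).
all: lia.
Qed.

End CyclicOrder.

Lemma set2P (T : finType) (a b a' b' : T) : a != b -> [set a; b] = [set a'; b'] ->
  (a' = a /\ b' = b) \/ (a' = b /\ b' = a).
Proof.
move=> ab e; have := cards2 a b; rewrite e cards2 ab => -[/esym a'b'].
have : (a' \in [set a; b]) && (b' \in [set a; b]) by rewrite e !inE !eqxx orbT.
rewrite !inE => /andP[/orP[]/eqP ea /orP[]/eqP eb]; subst;
  by [rewrite eqxx in a'b' | left | right].
Qed.

Section Interlace.
Variables (E : finType) (sigma : {perm dart E}).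
Local Notation sv := (same_vertex sigma).
Local Notation pos := (findex sigma).
Local Notation interlace := (interlace sigma).

Lemma same_vertexC a b : sv a b = sv b a.
Proof. exact: fconnect_permC. Qed.

(* With positions measured from any base dart r of the vertex, the chords {u,v} and
   {w,z} cross iff exactly one of w, z lies strictly between u and v. *)
Definition cross_at r u v w z :=
  between (pos r u) (pos r v) (pos r w) != between (pos r u) (pos r v) (pos r z).

Lemma interlace_at r u v w z : sv r u -> sv r v -> sv r w -> sv r z ->
  interlace u v w z = uniq [:: u; v; w; z] && cross_at r u v w z.
Proof.
move=> ru rv rw rz; have sv_r y : sv r y -> sv u y.
  by apply: connect_trans; rewrite fconnect_permC.
rewrite /interlace !sv_r // !andTb; case: (boolP (uniq [:: u; v; w; z])) => //= uniq4.
move: (uniq4); rewrite /= !in_cons in_nil !orbF !negb_or.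
case/and4P=> /and3P[uv uw uz] /andP[vw vz] wz _.
rewrite (findex_ltn_shift ru rv rw) // (findex_ltn_shift ru rv rz) // /cross_at.
by case: between; case: between; case: (_ < _).
Qed.

Lemma interlace_perm u v w z u' v' w' z' :
    perm_eq [:: u; v; w; z] [:: u'; v'; w'; z'] ->
    (forall r, all (sv r) [:: u; v; w; z] -> uniq [:: u; v; w; z] ->
       cross_at r u v w z = cross_at r u' v' w' z') ->
  interlace u v w z -> interlace u' v' w' z'.
Proof.
move=> perm cross_eq il; case/and5P: (il) => uv uw uz _ _.
have uu : sv u u by exact: connect0.
have u_all : all (sv u) [:: u; v; w; z] by rewrite /= uu uv uw uz.
have := u_all; rewrite (perm_all _ perm) => /and4P[uu' uv' uw' /andP[uz' _]].
move: il; rewrite (interlace_at uu uv uw uz) (interlace_at uu' uv' uw' uz').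
by rewrite -(perm_uniq perm) => /andP[uniq4 cr]; rewrite uniq4 -cross_eq.
Qed.

Lemma interlaceC u v w z : interlace u v w z = interlace v u w z.
Proof.
have sym u' v' : interlace u' v' w z -> interlace v' u' w z.
  apply: interlace_perm => [|r _ _]; first by apply/seq.permP => P /=; lia.
  by rewrite /cross_at !(between_sym (pos r u')).
by apply/idP/idP; apply: sym.
Qed.

Lemma interlaceCr u v w z : interlace u v w z = interlace u v z w.
Proof.
have sym w' z' : interlace u v w' z' -> interlace u v z' w'.
  apply: interlace_perm => [|r _ _]; first by apply/seq.permP => P /=; lia.
  by rewrite /cross_at eq_sym.
by apply/idP/idP; apply: sym.
Qed.

Lemma interlace_swap u v w z : interlace u v w z = interlace w z u v.
Proof.
have sym u' v' w' z' : interlace u' v' w' z' -> interlace w' z' u' v'.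
  apply: interlace_perm => [|r r_all uniq4]; first by apply/seq.permP => P /=; lia.
  by rewrite /cross_at between_swap // (uniq_findex r_all).
by apply/idP/idP; apply: sym.
Qed.

Lemma kcross_chords a b c d : a != b -> c != d ->
  kcross sigma (inr [set a; b]) (inr [set c; d]) = interlace a b c d.
Proof.
move=> ab cd; apply/existsP/idP => [[a' /existsP[b' /existsP[c' /existsP[d']]]]|il].
  case/and3P => /eqP/(set2P ab) eab /eqP/(set2P cd) ecd.
  case: eab => -[-> ->]; case: ecd => -[-> ->];
    by rewrite ?(interlaceC b) ?(interlaceCr _ _ d).
by exists a; apply/existsP; exists b; apply/existsP; exists c; apply/existsP; exists d;
  rewrite !eqxx.
Qed.

Lemma interlace_root a b c d : uniq [:: a; b; c; d] -> sv a b -> sv c d ->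
  interlace a b c d = (sv a c && (pos a c < pos a b)) (+) (sv a d && (pos a d < pos a b)).
Proof.
move=> uniq4 ab cd; rewrite /Defs.interlace ab uniq4.
have [ac|nac] := boolP (sv a c).
  by have ad : sv a d := connect_trans ac cd; rewrite ad negb_eqb.
have nad : ~~ sv a d.
  by apply: contra nac => ad; apply: connect_trans ad _; rewrite fconnect_permC.
by rewrite (negbTE nad) !andbF.
Qed.

End Interlace.

Section Counting.
Variable T : finType.

(* [tcross sigma D] is [#|rel_pairs (kcross sigma) D|]. *)
Definition rel_pairs (r : rel T) (D : {set T}) : {set {set T}} :=
  [set Q : {set T} | (Q \subset D) &&
      [exists k1, exists k2, (Q == [set k1; k2]) && (k1 != k2) && r k1 k2]].

Lemma rel_pairsU1_notin (r : rel T) (D : {set T}) k : k \notin D ->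
  rel_pairs r (k |: D) :\: [set Q : {set T} | k \in Q] = rel_pairs r D.
Proof.
move=> kD; apply/setP => Q; rewrite !inE; case: (boolP (k \in Q)) => kQ /=.
  by apply/esym/negbTE; apply: contra kD => /andP[/subsetP sQD _]; apply: sQD.
congr (_ && _); apply/subsetP/subsetP => sQ y yQ; have := sQ y yQ; rewrite !inE.
  by case/predU1P => // eyk; rewrite -eyk yQ in kQ.
by move->; rewrite orbT.
Qed.

Lemma rel_pairsU1_in (r : rel T) (D : {set T}) k : k \notin D ->
  rel_pairs r (k |: D) :&: [set Q : {set T} | k \in Q] =
  [set [set k; k'] | k' in [set k' in D | r k k' || r k' k]].
Proof.
move=> kD; apply/setP => Q; rewrite !inE; apply/andP/imsetP.
  case=> /andP[sQ /existsP[k1 /existsP[k2 /andP[/andP[/eqP eQ k12] r12]]]].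
  have k1D : k1 \in k |: D by apply: (subsetP sQ); rewrite eQ set21.
  have k2D : k2 \in k |: D by apply: (subsetP sQ); rewrite eQ set22.
  rewrite eQ !inE => /orP[]/eqP ek; subst k.
    by exists k2 => //; move: k2D; rewrite !inE r12 eq_sym (negbTE k12) /=; case: (_ \in D).
  exists k1; last by rewrite setUC.
  by move: k1D; rewrite !inE r12 orbT (negbTE k12); case: (_ \in D).
case=> k'; rewrite inE => /andP[k'D rk] ->; split; last exact: set21.
have kk' : k != k' by apply: contraNneq kD => ->.
rewrite subUset !sub1set !inE eqxx k'D orbT /=.
case/orP: rk => rk; apply/existsP; [exists k | exists k'];
  apply/existsP; [exists k' | exists k]; rewrite ?rk ?kk' ?eqxx //.
by rewrite setUC eqxx eq_sym kk'.
Qed.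

Lemma card_rel_pairsU1 (r : rel T) (D : {set T}) k : k \notin D ->
  #|rel_pairs r (k |: D)| = #|rel_pairs r D| + #|[set k' in D | r k k' || r k' k]|.
Proof.
move=> kD; rewrite -(cardsID [set Q : {set T} | k \in Q]).
rewrite rel_pairsU1_in // rel_pairsU1_notin //.
rewrite addnC card_in_imset // => k1 k2; rewrite !inE => /andP[k1D _] _ e.
have kk1 : k != k1 by apply: contraNneq kD => ->.
by have [[_ ->]|[ekk1 _]] := set2P kk1 e; last by rewrite ekk1 eqxx in kk1.
Qed.

Lemma odd_sum_eq (I : Type) (s : seq I) (P : pred I) (g h : I -> nat) :
    (forall i, P i -> odd (g i) = odd (h i)) ->
  odd (\sum_(i <- s | P i) g i) = odd (\sum_(i <- s | P i) h i).
Proof. by move=> gh; elim/big_ind2: _ => // m1 n1 m2 n2; rewrite !oddD => -> ->. Qed.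

Lemma sum_card_setI (F : {set {set T}}) (B : {set T}) :
  \sum_(U in F) #|U :&: B| = \sum_(c in B) #|[set U in F | c \in U]|.
Proof.
have card_UB U : #|U :&: B| = \sum_(c in B | c \in U) 1.
  by rewrite sum1dep_card; apply: eq_card => c; rewrite !inE andbC.
rewrite (eq_bigr _ (fun U _ => card_UB U)) (exchange_big_dep (mem B)) //=;
  last by move=> U c _ /andP[].
apply: eq_bigr => c cB; rewrite sum1dep_card; apply: eq_card => U.
by rewrite !inE [c \in B]cB.
Qed.

Lemma card_set2I (c d : T) (B : {set T}) :
  c != d -> #|[set c; d] :&: B| = (c \in B) + (d \in B).
Proof.
move=> cd; have uniq_cd : uniq [:: c; d] by rewrite /= inE cd.
transitivity (count (mem B) [:: c; d]); last by rewrite /= addn0.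
rewrite -size_filter -(card_uniqP (filter_uniq _ uniq_cd)).
by apply: eq_card => y; rewrite !inE mem_filter !inE andbC.
Qed.

Lemma card_sum_set (T1 T2 : finType) (A : {set T1 + T2}) :
  #|A| = #|[set x | inl x \in A]| + #|[set y | inr y \in A]|.
Proof. by rewrite -sum1_card big_sumType !sum1dep_card. Qed.

Local Open Scope ring_scope.

Lemma sum_sign_rank (R : pzRingType) (Y : {set T}) (q : T -> nat) :
    {in Y &, injective q} ->
  \sum_(b in Y) (-1) ^+ #|[set c in Y | (q c < q b)%N]| = (odd #|Y|)%:R :> R.
Proof.
elim: {Y}_.+1 {-2}Y (ltnSn #|Y|) => // n IH Y le_Yn q_inj.
have [->|[b0 b0Y]] := set_0Vmem Y; first by rewrite big_set0 cards0.
have [m mY q_max] := arg_maxnP q b0Y; have {}mY : m \in Y := mY.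
have below_max : [set c in Y | (q c < q m)%N] = Y :\ m.
  apply/setP => c; rewrite !inE; case: (eqVneq c m) => [->|cm]; first by rewrite ltnn andbF.
  case cY: (c \in Y) => //=; rewrite ltn_neqAle; apply/andP; split; last exact: q_max.
  by apply: contra cm => /eqP/(q_inj _ _ cY mY) ->.
have inj' : {in Y :\ m &, injective q} by apply: sub_in2 q_inj => c /setD1P[].
rewrite (bigD1 m) //= below_max (eq_bigl (mem (Y :\ m))) => [|b]; last first.
  by rewrite !inE andbC.
rewrite (eq_bigr (fun b => (-1) ^+ #|[set c in Y :\ m | (q c < q b)%N]|)) => [|b].
  rewrite IH //; last by move: le_Yn; rewrite (cardsD1 m Y) mY add1n ltnS.
  rewrite (cardsD1 m Y) mY -signr_odd /=.
  by case: (odd _); rewrite ?expr1 ?expr0 ?addNr ?addr0.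
rewrite !inE => /andP[bm bY]; congr (_ ^+ _); apply: eq_card => c; rewrite !inE.
case: (eqVneq c m) => [->|//]; have := q_max b bY.
by rewrite /= mY leqNgt => /negbTE->.
Qed.

Lemma sqrt_prod (R : rcfType) (I : finType) (A : {pred I}) (f : I -> R) :
    (forall i, i \in A -> 0 <= f i) ->
  Num.sqrt (\prod_(i in A) f i) = \prod_(i in A) Num.sqrt (f i).
Proof.
move=> f_ge0; rewrite -(eq_bigr _ (fun i Ai => sqr_sqrtr (f_ge0 i Ai))) prodrXl sqrtr_sqr.
by rewrite ger0_norm // prodr_ge0 // => i _; apply: sqrtr_ge0.
Qed.

End Counting.

Section ChordMatchings.
Variables (E : finType) (sigma : {perm dart E}).
Local Notation T := (dart E).
Local Notation sv := (same_vertex sigma).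
Local Notation pos := (findex sigma).

Definition chord (U : {set T}) := (#|U| == 2) && [forall a in U, forall b in U, sv a b].

Definition chord_matching (X : {set T}) (F : {set {set T}}) :=
  [forall U in F, chord U] && [forall d, #|[set U in F | d \in U]| == (d \in X)].

Definition partners (X : {set T}) a := [set b in X | sv a b & b != a].

Definition even_at_vertices (X : {set T}) :=
  [forall d, ~~ odd #|[set d' | sv d d' & d' \in X]|].

Lemma chordP U : chord U -> exists a b, [/\ a != b, sv a b & U = [set a; b]].
Proof.
case/andP=> /cards2P[a [b [ab ->]]] /forall_inP/(_ a (set21 a b))/forall_inP sv_a.
by exists a, b; split; rewrite // sv_a ?set22.
Qed.

Lemma chord2 a b : a != b -> sv a b -> chord [set a; b].
Proof.
move=> ab sab; rewrite /chord cards2 ab /=.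
have sv_ab x : x \in [set a; b] -> sv a x.
  by rewrite !inE => /orP[]/eqP->; rewrite ?sab //; exact: connect0.
apply/forall_inP => y /sv_ab ay; apply/forall_inP => z /sv_ab az.
by apply: connect_trans az; rewrite fconnect_permC.
Qed.

Section Matching.
Variables (X : {set T}) (F : {set {set T}}).
Hypothesis FX : chord_matching X F.

Lemma matching_chord U : U \in F -> chord U.
Proof. by case/andP: FX => /forall_inP chords _; apply: chords. Qed.

Lemma matching_cover d : #|[set U in F | d \in U]| = (d \in X).
Proof. by case/andP: FX => _ /forallP/(_ d)/eqP. Qed.

Lemma matching_sub U d : U \in F -> d \in U -> d \in X.
Proof.
move=> UF dU; rewrite -[d \in X]lt0b -matching_cover.
by apply/card_gt0P; exists U; rewrite inE UF.
Qed.

Lemma matching_eq U V d : U \in F -> V \in F -> d \in U -> d \in V -> U = V.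
Proof.
move=> UF VF dU dV; apply/eqP; apply: contraTT (leq_b1 (d \in X)) => UV.
have sub_UV : [set U; V] \subset [set W in F | d \in W].
  by apply/subsetP => W; rewrite !inE => /orP[]/eqP->; apply/andP.
by rewrite -matching_cover -ltnNge (leq_trans _ (subset_leq_card sub_UV)) // cards2 UV.
Qed.

Lemma matching_partner a : a \in X ->
  exists b, forall b', (b' \in partners X a) && ([set a; b'] \in F) = (b' == b).
Proof.
move=> aX; have /card_gt0P[U] : 0 < #|[set U in F | a \in U]| by rewrite matching_cover aX.
rewrite inE => /andP[UF aU]; have [c [d [cd scd eU]]] := chordP (matching_chord UF).
have [b [ab sab abF]] : exists b, [/\ a != b, sv a b & [set a; b] \in F].
  move: aU; rewrite eU in_set2 => /orP[]/eqP eac; subst a; first by exists d; rewrite -eU.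
  by exists c; rewrite eq_sym same_vertexC setUC -eU.
exists b => b'; rewrite inE; apply/andP/eqP => [[/and3P[_ _ b'a] ab'F]|->].
  rewrite eq_sym in b'a.
  by have [[]|[/eqP]] := set2P b'a (matching_eq ab'F abF (set21 a b') (set21 a b));
    last by rewrite (negbTE b'a).
by rewrite abF eq_sym ab sab (matching_sub abF (set22 a b)).
Qed.

End Matching.

Lemma chord_matching0 F : chord_matching set0 F = (F == set0).
Proof.
apply/idP/eqP => [FX|->]; last first.
  by apply/andP; split; apply/forallP => d; rewrite ?inE // cards_eq0 -subset0;
    apply/subsetP => U; rewrite !inE.
apply/setP => U; rewrite inE; apply/negP => UF.
have [a [b [_ _ eU]]] := chordP (matching_chord FX UF).
by have := matching_sub FX UF (_ : a \in U); rewrite inE eU set21 => /(_ isT).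
Qed.

Lemma card_coverU1 (F : {set {set T}}) U d : U \notin F ->
  #|[set V in U |: F | d \in V]| = (d \in U) + #|[set V in F | d \in V]|.
Proof.
move=> UF; case: (boolP (d \in U)) => dU; last first.
  apply: eq_card => V; rewrite !inE.
  by case: (eqVneq V U) => // ->; rewrite (negbTE dU) !andbF.
have -> : [set V in U |: F | d \in V] = U |: [set V in F | d \in V].
  by apply/setP => V; rewrite !inE; case: (eqVneq V U) => // ->.
by rewrite cardsU1 inE (negbTE UF).
Qed.

Lemma chord_matchingU1 (X : {set T}) F a b : a != b -> a \in X -> b \in X -> sv a b ->
  chord_matching X ([set a; b] |: F) && ([set a; b] \notin F) =
  chord_matching (X :\ a :\ b) F.
Proof.
move=> ab aX bX sab.
have cover_ab d : (d \in [set a; b]) + (d \in X :\ a :\ b) = (d \in X).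
  rewrite in_set2 !in_setD1; case: (eqVneq d a) => [->|da] /=; first by rewrite andbF aX.
  by case: (eqVneq d b) => [->|db] /=; rewrite ?bX.
apply/idP/idP => [/andP[FX abF] | FX].
  apply/andP; split.
    by apply/forall_inP => U UF; apply: (matching_chord FX); rewrite setU1r.
  apply/forallP => d; have := matching_cover FX d; rewrite card_coverU1 // -cover_ab.
  by move/addnI->.
have abF : [set a; b] \notin F.
  by apply/negP => abF; have := matching_sub FX abF (set22 a b); rewrite setD11.
rewrite abF andbT; apply/andP; split.
  by apply/forall_inP => U /setU1P[->|/(matching_chord FX)//]; apply: chord2.
by apply/forallP => d; rewrite card_coverU1 // (matching_cover FX) cover_ab.
Qed.

Lemma even_at_verticesD2 (X : {set T}) a b : a != b -> a \in X -> b \in X -> sv a b ->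
  even_at_vertices (X :\ a :\ b) = even_at_vertices X.
Proof.
move=> ab aX bX sab; apply: eq_forallb => d.
set S := [set d' | sv d d' & d' \in X].
have db : sv d b = sv d a := esym (same_connect_r (@fconnect_permC _ sigma) sab d).
rewrite (cardsD1 a S) (cardsD1 b (S :\ a)) !inE aX bX (eq_sym b a) ab db /=.
have -> : S :\ a :\ b = [set d' | sv d d' & d' \in X :\ a :\ b].
  by apply/setP => y; rewrite !inE; case: (sv d y); rewrite ?andbF.
by rewrite addnA addnn oddD odd_double.
Qed.

Lemma odd_partners (X : {set T}) a : a \in X -> even_at_vertices X -> odd #|partners X a|.
Proof.
move=> aX /forallP/(_ a); have -> : [set d' | sv a d' & d' \in X] = a |: partners X a.
  apply/setP => y; rewrite !inE; case: (eqVneq y a) => [->|ya] /=; last by rewrite andbT andbC.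
  by rewrite aX andbT; exact: connect0.
by rewrite cardsU1 !inE eqxx !andbF /= negbK.
Qed.

Definition dimer_of (L : {set E}) (F : {set {set T}}) : {set kedge E} :=
  [set k | match k with inl e => e \in L | inr U => U \in F end].

Definition crossings (F : {set {set T}}) := tcross sigma (dimer_of set0 F).

Lemma crossingsU1 (F : {set {set T}}) U : U \notin F ->
  crossings (U |: F) = crossings F +
    #|[set V in F | kcross sigma (inr U) (inr V) || kcross sigma (inr V) (inr U)]|.
Proof.
move=> UF; rewrite /crossings; have -> : dimer_of set0 (U |: F) = inr U |: dimer_of set0 F.
  by apply/setP => -[e|V]; rewrite !inE.
rewrite [tcross _ _](card_rel_pairsU1 (kcross sigma)) ?inE //; congr (_ + _).
have inr_inj : injective (@inr E {set T}) by move=> ? ? [].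
rewrite -(card_imset _ inr_inj); apply: eq_card => -[e|V]; rewrite !inE.
  by apply/esym/imsetP => -[].
by rewrite (mem_imset _ _ inr_inj) inE.
Qed.

Lemma crossing_parity (X : {set T}) F a b :
    a != b -> a \in X -> b \in X -> sv a b -> chord_matching (X :\ a :\ b) F ->
  odd #|[set V in F | kcross sigma (inr [set a; b]) (inr V)
                      || kcross sigma (inr V) (inr [set a; b])]| =
  odd #|[set c in partners X a | pos a c < pos a b]|.
Proof.
move=> ab aX bX sab FX; set B := [set c in partners X a | _].
have inB y : y \in X :\ a :\ b -> (y \in B) = sv a y && (pos a y < pos a b).
  by rewrite !inE => /and3P[_ ya yX]; rewrite yX ya andbT.
have B_sub y : y \in B -> y \in X :\ a :\ b.
  rewrite !inE => /andP[/and3P[yX _ ya] lt_yb]; rewrite yX ya /= andbT.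
  by apply: contraTneq lt_yb => ->; rewrite ltnn.
have -> : #|B| = \sum_(V in F) #|V :&: B|.
  rewrite sum_card_setI -[#|B|]sum1_card; apply: eq_bigr => y /B_sub yX.
  by rewrite (matching_cover FX) yX.
rewrite -sum1dep_card big_mkcondr; apply: odd_sum_eq => V VF.
have [c [d [cd scd eV]]] := chordP (matching_chord FX VF).
have cX : c \in X :\ a :\ b by rewrite (matching_sub FX VF) // eV set21.
have dX : d \in X :\ a :\ b by rewrite (matching_sub FX VF) // eV set22.
have uniq4 : uniq [:: a; b; c; d].
  move: cX dX; rewrite !inE /= !negb_or ab cd => /and3P[cb ca _] /and3P[db da _].
  by rewrite !(eq_sym a) !(eq_sym b) ca da cb db.
rewrite eV !kcross_chords // (interlace_swap _ c) orbb interlace_root // card_set2I //.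
by rewrite oddD !oddb !inB //; case: (_ (+) _).
Qed.

Local Open Scope ring_scope.

Lemma sum_matchings_with_chord (R : pzRingType) (X : {set T}) a b :
    a != b -> a \in X -> b \in X -> sv a b ->
  \sum_(F | chord_matching X F && ([set a; b] \in F)) (-1) ^+ crossings F =
  (-1) ^+ #|[set c in partners X a | (pos a c < pos a b)%N]| *
  \sum_(F | chord_matching (X :\ a :\ b) F) (-1) ^+ crossings F :> R.
Proof.
move=> ab aX bX sab; rewrite mulr_sumr.
rewrite (reindex_onto (fun F => [set a; b] |: F) (fun F => F :\ [set a; b])) /=; last first.
  by move=> F /andP[_ abF]; rewrite setD1K.
rewrite [LHS](eq_bigl (chord_matching (X :\ a :\ b))) => [|F]; last first.
  rewrite setU11 andbT -chord_matchingU1 //; congr (_ && _).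
  by apply/eqP/idP => [<-|/setU1K //]; rewrite setD11.
apply: eq_bigr => F FX.
have abF : [set a; b] \notin F.
  by apply/negP => abF; have := matching_sub FX abF (set22 a b); rewrite setD11.
rewrite crossingsU1 // addnC exprD; congr (_ * _).
by rewrite -signr_odd (crossing_parity ab aX bX sab FX) signr_odd.
Qed.

Lemma crossings0 : crossings set0 = 0%N.
Proof.
rewrite /crossings (_ : dimer_of set0 set0 = set0); last by apply/setP => -[e|U]; rewrite !inE.
apply/eqP; rewrite cards_eq0; apply/eqP/setP => Q; rewrite !inE subset0.
by apply/negP => /andP[/eqP-> /existsP[k1 /existsP[k2 /andP[/andP[/eqP/setP/(_ k1)]]]]];
  rewrite !inE eqxx.
Qed.

Lemma even_at_vertices0 : even_at_vertices set0.
Proof.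
apply/forallP => d; rewrite (_ : [set _ | _] = set0) ?cards0 //.
by apply/setP => y; rewrite !inE andbF.
Qed.

Theorem sum_sign_chord_matchings (R : pzRingType) (X : {set T}) :
  \sum_(F | chord_matching X F) (-1) ^+ crossings F = (even_at_vertices X)%:R :> R.
Proof.
elim: {X}_.+1 {-2}X (ltnSn #|X|) => // n IH X le_Xn.
have [->|[a aX]] := set_0Vmem X.
  rewrite (big_pred1 set0) => [|F]; last by rewrite chord_matching0.
  by rewrite crossings0 even_at_vertices0.
set Y := partners X a.
rewrite (eq_bigr (fun F : {set {set T}} =>
                   \sum_(b in Y | [set a; b] \in F) (-1) ^+ crossings F)) => [|F FX];
  last by have [b0 pb] := matching_partner FX aX; rewrite (big_pred1 b0).
rewrite (exchange_big_dep (mem Y)) => [|F b _ /andP[]//] /=.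
rewrite (eq_bigr (fun b => (-1) ^+ #|[set c in Y | (pos a c < pos a b)%N]|
                            * (even_at_vertices X)%:R)) => [|b]; last first.
  move=> bY; rewrite (eq_bigl (fun F => chord_matching X F && ([set a; b] \in F))) => [|F];
    last by rewrite bY.
  move: bY; rewrite inE => /and3P[bX sab ba]; have ab : a != b by rewrite eq_sym.
  rewrite sum_matchings_with_chord // IH ?even_at_verticesD2 //.
  by move: le_Xn; rewrite (cardsD1 a X) (cardsD1 b (X :\ a)) aX in_setD1 ba bX; lia.
rewrite -big_distrl /= sum_sign_rank; last first.
  by apply: sub_in2 (@findex_inj _ sigma a) => y; rewrite inE => /and3P[].
by case: (boolP (even_at_vertices X)) => [evX|_]; rewrite ?mulr0 // odd_partners // mulr1.
Qed.

End ChordMatchings.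

Section Dimers.
Variables (E : finType) (sigma : {perm dart E}).
Local Notation T := (dart E).

Definition long_edges (D : {set kedge E}) : {set E} := [set e | inl e \in D].
Definition short_edges (D : {set kedge E}) : {set {set T}} := [set U | inr U \in D].
Definition darts_of (P : {set E}) : {set T} := [set d | d.1 \in P].

Lemma dimer_of_edges (D : {set kedge E}) : dimer_of (long_edges D) (short_edges D) = D.
Proof. by apply/setP => -[e|U]; rewrite !inE. Qed.

Lemma long_edges_dimer_of (L : {set E}) (F : {set {set T}}) : long_edges (dimer_of L F) = L.
Proof. by apply/setP => e; rewrite !inE. Qed.

Lemma short_edges_dimer_of (L : {set E}) (F : {set {set T}}) : short_edges (dimer_of L F) = F.
Proof. by apply/setP => U; rewrite !inE. Qed.

Lemma in_kends_inl (e : E) (d : T) : (d \in kends (inl e)) = (d.1 == e).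
Proof. by case: d => e' []; rewrite !inE !xpair_eqE /= ?andbT ?andbF ?orbF. Qed.

Lemma card_kends_dimer_of (L : {set E}) (F : {set {set T}}) d :
  #|[set k in dimer_of L F | d \in kends k]| = (d.1 \in L) + #|[set U in F | d \in U]|.
Proof.
rewrite card_sum_set; congr (_ + _); last by apply: eq_card => U; rewrite !inE.
rewrite -sum1dep_card (eq_bigl (fun e => (e == d.1) && (e \in L))) => [|e]; last first.
  by rewrite in_set in_kends_inl in_set /= eq_sym andbC.
by rewrite big_mkcondr big_pred1_eq; case: (_ \in L).
Qed.

Lemma dimer_dimer_of (L : {set E}) (F : {set {set T}}) :
  dimer sigma (dimer_of L F) = chord_matching sigma (darts_of (~: L)) F.
Proof.
rewrite /dimer /chord_matching; congr (_ && _).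
  apply/forall_inP/forall_inP => valid_D.
    by move=> U UF; apply: (valid_D (inr U)); rewrite inE.
  by case=> [e|U]; rewrite inE // => /valid_D.
apply: eq_forallb => d; rewrite card_kends_dimer_of !inE.
by case: (d.1 \in L) => /=; case: #|_| => [|[]].
Qed.

Lemma tcross_dimer_of (L : {set E}) (F : {set {set T}}) :
  tcross sigma (dimer_of L F) = crossings sigma F.
Proof.
apply: eq_card => Q; rewrite !inE; apply/andP/andP => -[sQ crossQ]; split => //.
all: case/existsP: (crossQ) => k1 /existsP[k2 /andP[/andP[/eqP eQ _]]].
all: case: k1 {eQ} (eQ) => // U1; case: k2 => // U2 eQ _.
all: by move: sQ; rewrite eQ !subUset !sub1set !inE.
Qed.

Lemma even_subgraph_darts (P : {set E}) :
  even_subgraph sigma P = even_at_vertices sigma (darts_of P).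
Proof. by apply: eq_forallb => d; congr (~~ odd _); apply: eq_card => d'; rewrite !inE. Qed.

Local Open Scope ring_scope.

Lemma prod_matching (R : comPzSemiRingType) X F (g : T -> R) :
  chord_matching sigma X F -> \prod_(U in F) \prod_(d in U) g d = \prod_(d in X) g d.
Proof.
move=> FX; rewrite (exchange_big_dep (mem X)) /= => [|U d UF dU]; last first.
  exact: (matching_sub FX UF).
apply: eq_bigr => d dX; rewrite (eq_bigl (mem [set U in F | d \in U])) => [|U]; last first.
  by rewrite !inE.
by rewrite prodr_const (matching_cover FX) dX expr1.
Qed.

Lemma prod_darts_of (R : comPzSemiRingType) (P : {set E}) (h : E -> R) :
  \prod_(d in darts_of P) h d.1 = \prod_(e in P) h e ^+ 2.
Proof.
rewrite (eq_bigl (fun d : T => (d.1 \in P) && predT d.2)) => [|d]; last by rewrite !inE andbT.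
by rewrite -(pair_big_dep (mem P) (fun _ => predT) (fun e _ => h e)); apply: eq_bigr => e _;
  rewrite big_bool expr2.
Qed.

Lemma weight_dimer_of (R : rcfType) (x : E -> R) (L : {set E}) F :
    (forall e, 0 <= x e) -> chord_matching sigma (darts_of (~: L)) F ->
  \prod_(k in dimer_of L F) kweight x k = \prod_(e in ~: L) x e.
Proof.
move=> x_ge0 FX; rewrite big_sumType /= big1 ?mul1r // (eq_bigl (mem F)) => [|U]; last first.
  by rewrite inE.
rewrite (eq_bigr (fun U : {set T} => \prod_(d in U) Num.sqrt (x d.1))) => [|U _];
  last exact: sqrt_prod.
rewrite (prod_matching _ FX) (prod_darts_of _ (fun e => Num.sqrt (x e))).
by apply: eq_bigr => e _; apply: sqr_sqrtr.
Qed.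

Lemma sum_dimers_with_long_edges (R : rcfType) (x : E -> R) (L : {set E}) :
    (forall e, 0 <= x e) ->
  \sum_(D | dimer sigma D && (long_edges D == L))
     (-1) ^+ tcross sigma D * \prod_(k in D) kweight x k =
  (even_subgraph sigma (~: L))%:R * \prod_(e in ~: L) x e.
Proof.
move=> x_ge0; rewrite (reindex_onto (dimer_of L) short_edges) => [|D /andP[_ /eqP <-]];
  last exact: dimer_of_edges.
rewrite (eq_bigl (chord_matching sigma (darts_of (~: L)))) => [|F]; last first.
  by rewrite dimer_dimer_of long_edges_dimer_of short_edges_dimer_of !eqxx !andbT.
rewrite (eq_bigr (fun F => (-1) ^+ crossings sigma F * \prod_(e in ~: L) x e)) => [|F FX].
  by rewrite -big_distrl /= sum_sign_chord_matchings even_subgraph_darts.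
by rewrite tcross_dimer_of weight_dimer_of.
Qed.

End Dimers.

Local Open Scope ring_scope.

Theorem lemma2p1 (R : rcfType) (E : finType) (sigma : {perm dart E})
    (x : E -> R) :
  rs_connected sigma -> rs_planar sigma -> (forall e, 0 <= x e) ->
  Z_Ising sigma x = Z_dimer_signed sigma x.
Proof.
move=> _ _ x_ge0.
rewrite /Z_dimer_signed (partition_big (@long_edges E) xpredT) //=.
rewrite (eq_bigr _ (fun L _ => sum_dimers_with_long_edges sigma L x_ge0)).
rewrite /Z_Ising big_mkcond (reindex_inj (@setC_inj E)) /=; apply: eq_bigr => L _.
by case: (even_subgraph sigma (~: L)); rewrite ?mul1r ?mul0r.
Qed.
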